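(* Let $k\ge 1$ be an integer, $\Delta\ge 0$, and let $w_1\ge w_2\ge\cdots\ge w_N\ge 0$ be reals (with the convention $w_j:=0$ for $j>N$). Suppose that $w_1+w_{k+1}<\tfrac79$, $w_{2k+1}\le\Delta$, and $\sum_{j=1}^N w_j>k\left(\tfrac79+\Delta\right)$. Then the values $w_j$ with $j>3k$ can be divided fractionally among $k$ bundles so that, for every $r\in\{1,\dots,k\}$, bundle $r$ consists of $w_r,w_{k+r},w_{2k+r}$ plus its share of the tail and has total value greater than $\tfrac79+\Delta$. Formally, there exist reals $x_{r,j}\ge 0$ ($1\le r\le k$, $3k<j\le N$) with $\sum_{r=1}^k x_{r,j}=w_j$ for all $j>3k$ and $$w_r+w_{k+r}+w_{2k+r}+\sum_{j>3k}x_{r,j}>\tfrac79+\Delta\quad\text{for all } r\in\{1,\dots,k\}.$$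
   Context: In the paper, the $w_j$ are agent $i$'s values (normalized so that her target is 1) of the items of the witness allocation in round $k$, $\Delta$ is the largest value among witness items worth less than $2/9$ (at most $2k$ items are worth at least $2/9$, which gives $w_{2k+1}\le\Delta$), and the sum hypothesis is the ''Water-Level Condition'' that every one of the $k$ witness bundles is worth more than $\tfrac79+\Delta$. Items of small value (''water'') are treated as fractionally divisible. *)

From mathcomp Require Import all_boot all_order all_algebra.
Set Implicit Arguments. Unset Strict Implicit. Unset Printing Implicit Defensive.
Import Order.TTheory GRing.Theory Num.Theory.
Local Open Scope ring_scope.

(* Values w_1,...,w_N given by w : nat -> R (indices 1..N);
   wext N w j is w_j with the convention w_j := 0 for j > N (and for j = 0). *)
Definition wext (R : realFieldType) (N : nat) (w : nat -> R) (j : nat) : R :=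
  if (1 <= j <= N)%N then w j else 0.

(* Each bundle's three large items are dominated termwise by w_1, w_(k+1), w_(2k+1),
   so every bundle falls short of 7/9 + Delta by a positive deficit.  The sum
   hypothesis says exactly that the tail beyond index 3k exceeds the total deficit;
   handing each tail item out in proportion to the deficits therefore gives every
   bundle strictly more than its deficit. *)
From mathcomp Require Import all_boot all_order all_algebra.
From mathcomp Require Import zify lra.
Set Implicit Arguments. Unset Strict Implicit. Unset Printing Implicit Defensive.

Import Order.TTheory GRing.Theory Num.Theory.
Local Open Scope ring_scope.

Lemma proportional_shares (R : realFieldType) (I J : eqType)
    (s : seq I) (t : seq J) (d : I -> R) (v : J -> R) :
  s != [::] -> (forall r, r \in s -> 0 < d r) -> (forall j, j \in t -> 0 <= v j) ->
  \sum_(r <- s) d r < \sum_(j <- t) v j ->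
  exists x : I -> J -> R,
    [/\ forall r j, r \in s -> j \in t -> 0 <= x r j,
        forall j, \sum_(r <- s) x r j = v j
      & forall r, r \in s -> d r < \sum_(j <- t) x r j].
Proof.
move=> s_nz d_gt0 v_ge0 sum_lt.
set D := \sum_(r <- s) d r; set T := \sum_(j <- t) v j.
have D_gt0 : 0 < D.
  have [r0 r0s] : exists r0, r0 \in s.
    by case: s s_nz {d_gt0 sum_lt D T} => // r0 ? _; exists r0; rewrite mem_head.
  rewrite /D (big_rem r0 r0s) ltr_pwDl ?d_gt0 // big_seq sumr_ge0 // => r /mem_rem rs.
  by rewrite ltW ?d_gt0.
exists (fun r j => v j * (d r / D)); split.
- by move=> r j rs jt; rewrite mulr_ge0 ?divr_ge0 ?v_ge0 ?ltW ?d_gt0.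
- by move=> j; rewrite -mulr_sumr -mulr_suml divff ?mulr1 ?gt_eqF.
- move=> r rs; rewrite -mulr_suml -/T mulrA ltr_pdivlMr //.
  by rewrite mulrC ltr_pM2r ?d_gt0.
Qed.

Lemma sum_nat_three_blocks (R : nmodType) (f : nat -> R) (k : nat) :
  \sum_(1 <= j < (3 * k).+1) f j =
  \sum_(1 <= r < k.+1) (f r + f (k + r)%N + f (2 * k + r)%N).
Proof.
have shift a : \sum_(a.+1 <= j < (a + k).+1) f j = \sum_(1 <= r < k.+1) f (a + r)%N.
  rewrite -(add1n a) big_addn; have -> : ((a + k).+1 - a = k.+1)%N by lia.
  by apply: eq_bigr => r _; rewrite addnC.
rewrite !big_split -shift -(shift (2 * k)%N).
have [-> ->] : (k + k = 2 * k)%N /\ (2 * k + k = 3 * k)%N by lia.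
by rewrite -!big_cat_nat //; lia.
Qed.

Section ZeroExtension.
Variables (R : realFieldType) (N : nat) (w : nat -> R).

Lemma sum_wext_cat n : \sum_(1 <= j < N.+1) w j =
  \sum_(1 <= j < n.+1) wext N w j + \sum_(n.+1 <= j < N.+1) w j.
Proof.
elim: n => [|n IH]; first by rewrite [X in _ = X + _]big_geq // add0r.
rewrite IH [X in _ = X + _]big_nat_recr //= -addrA; congr (_ + _).
rewrite /wext; case: (ltnP n.+1 N.+1) => h.
  by rewrite big_ltn // ifT //; lia.
by rewrite !big_geq ?ifF ?addr0 //; lia.
Qed.

Hypothesis w_ge0 : forall j, (1 <= j <= N)%N -> 0 <= w j.
Hypothesis w_noninc : forall j, (1 <= j)%N -> (j < N)%N -> w j.+1 <= w j.

Lemma wext_noninc i j : (1 <= i <= j)%N -> wext N w j <= wext N w i.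
Proof.
move=> /andP[i_ge1 le_ij].
apply: (homo_leq_in (D := [pred n | 0 < n]%N) (f := wext N w) (r := fun a b => b <= a))
  => //=.
- by move=> y x z yx zy; apply: le_trans zy yx.
- by move=> a b _ _ c; rewrite !inE; lia.
- move=> a; rewrite !inE /wext => a_gt0 _; case: (ltnP a N) => aN /=.
    by rewrite [X in _ <= X]ifT ?w_noninc //; lia.
  by case: ifP => // /w_ge0.
- by rewrite inE (leq_trans i_ge1).
Qed.

End ZeroExtension.

Theorem lemma5p5 (R : realFieldType) (k N : nat) (Delta : R) (w : nat -> R) :
  (1 <= k)%N -> 0 <= Delta ->
  (forall j : nat, (1 <= j)%N -> (j < N)%N -> w j.+1 <= w j) ->
  (forall j : nat, (1 <= j <= N)%N -> 0 <= w j) ->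
  wext N w 1 + wext N w k.+1 < 7 / 9 ->
  wext N w (2 * k).+1 <= Delta ->
  \sum_(1 <= j < N.+1) w j > k%:R * (7 / 9 + Delta) ->
  exists x : nat -> nat -> R,
    (forall (r : nat) (j : nat), (1 <= r <= k)%N -> (3 * k < j <= N)%N -> 0 <= x r j) /\
    (forall j : nat, (3 * k < j <= N)%N -> \sum_(1 <= r < k.+1) x r j = w j) /\
    (forall r : nat, (1 <= r <= k)%N ->
       wext N w r + wext N w (k + r) + wext N w (2 * k + r)
         + \sum_((3 * k).+1 <= j < N.+1) x r j > 7 / 9 + Delta).
Proof.
move=> k_ge1 _ w_noninc w_ge0 top_lt mid_le sum_gt.
set c := 7 / 9 + Delta.
set a := fun r => wext N w r + wext N w (k + r) + wext N w (2 * k + r).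
have deficit_gt0 r : r \in index_iota 1 k.+1 -> 0 < c - a r.
  rewrite mem_index_iota => r_range; rewrite subr_gt0 /a /c.
  have noninc i j : (1 <= i <= j)%N -> wext N w j <= wext N w i.
    exact: wext_noninc.
  have : wext N w r <= wext N w 1 by apply: noninc; lia.
  have : wext N w (k + r) <= wext N w k.+1 by apply: noninc; lia.
  have : wext N w (2 * k + r) <= wext N w (2 * k).+1 by apply: noninc; lia.
  lra.
have tail_ge0 j : j \in index_iota (3 * k).+1 N.+1 -> 0 <= w j.
  by rewrite mem_index_iota => j_range; apply: w_ge0; lia.
have deficit_lt_tail :
    \sum_(1 <= r < k.+1) (c - a r) < \sum_((3 * k).+1 <= j < N.+1) w j.
  move: sum_gt; rewrite (sum_wext_cat _ _ (3 * k)) sum_nat_three_blocks sumrB.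
  by rewrite sumr_const_nat subn1 /= mulr_natl /c /a ltrBlDl.
have [|x [x_ge0 x_sum x_big]] := proportional_shares _ deficit_gt0 tail_ge0 deficit_lt_tail.
  by rewrite -size_eq0 size_iota; lia.
exists x; split; [|split].
- by move=> r j r_range j_range; apply: x_ge0; rewrite mem_index_iota; lia.
- by move=> j _; apply: x_sum.
- move=> r r_range; have r_in : r \in index_iota 1 k.+1 by rewrite mem_index_iota; lia.
  by rewrite -ltrBlDl; apply: x_big.
Qed.
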